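(* Let $\mathbb{X}$ be a reflexive real Banach space and $\mathbb{Y}$ a smooth real Banach space (both of dimension greater than $1$). Let $T\in\mathbb{K}(\mathbb{X},\mathbb{Y})$ with $\|T\|=1$. Suppose that for every $\epsilon>0$, $T$ admits a uniform $\epsilon$-BPB approximation $A_\epsilon\in\mathbb{K}(\mathbb{X},\mathbb{Y})$ with $A_\epsilon\neq T$ which is a smooth point of $\mathbb{K}(\mathbb{X},\mathbb{Y})$. Then $T$ is a smooth point of $\mathbb{K}(\mathbb{X},\mathbb{Y})$.
   Context: $\mathbb{K}(\mathbb{X},\mathbb{Y})$ (resp. $\mathbb{L}(\mathbb{X},\mathbb{Y})$) denotes the compact (resp. bounded) linear operators with the operator norm; $S_{\mathbb{X}}$ is the unit sphere. A nonzero element $x$ of a Banach space $\mathbb{Z}$ is a smooth point if there is a unique $f\in\mathbb{Z}^*$ with $\|f\|=1$ and $f(x)=\|x\|$; $\mathbb{Y}$ is smooth if all its nonzero points are smooth. For $T$ with $\|T\|=1$ and fixed $\epsilon>0$, an operator $A\in\mathbb{L}(\mathbb{X},\mathbb{Y})$ with $\|A\|=1$ is a uniform $\epsilon$-BPB approximation of $T$ if there exists $\delta(\epsilon)>0$ such that whenever $x_0\in S_{\mathbb{X}}$ satisfies $\|Tx_0\|>1-\delta(\epsilon)$, there exists $u_0\in S_{\mathbb{X}}$ with $\|Au_0\|=1$, $\|u_0-x_0\|<\epsilon$ and $\|A-T\|<\epsilon$. *)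

From HB Require Import structures.
From mathcomp Require Import all_boot all_order all_algebra.
From mathcomp Require Import all_classical all_reals all_analysis.
Set Implicit Arguments. Unset Strict Implicit. Unset Printing Implicit Defensive.
Import Order.TTheory GRing.Theory Num.Theory.
Import numFieldNormedType.Exports.
Local Open Scope classical_set_scope.
Local Open Scope ring_scope.

Section Defs.
Variable R : realType.

Definition cball1 {V : normedModType R} : set V := [set v : V | `|v| <= 1].

Definition dual_elt (V : normedModType R) (g : V -> R) : Prop :=
  (forall (a : R) (u v : V), g (a *: u + v) = a * g u + g v) /\
  exists C : R, forall v : V, `|g v| <= C * `|v|.

Definition fnorm (V : normedModType R) (g : V -> R) : R :=
  sup [set `|g v| | v in @cball1 V].

Definition smooth_pt (V : normedModType R) (y : V) : Prop :=
  y != 0 /\ exists! g : V -> R, dual_elt g /\ fnorm g = 1 /\ g y = `|y|.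

Definition smooth_space (V : normedModType R) : Prop :=
  forall y : V, y != 0 -> smooth_pt y.

(* reflexivity: the canonical embedding J : V -> V^** is surjective.
   An element of V^** is a bounded linear functional on V^*. *)
Definition reflexive_space (V : normedModType R) : Prop :=
  forall phi : (V -> R) -> R,
    (forall (a : R) (g h : V -> R), dual_elt g -> dual_elt h ->
        phi (fun v => a * g v + h v) = a * phi g + phi h) ->
    (exists C : R, forall g, dual_elt g -> `|phi g| <= C * fnorm g) ->
    exists x : V, forall g, dual_elt g -> phi g = g x.

Definition dim_gt1 (V : normedModType R) : Prop :=
  exists u v : V, forall a b : R, a *: u + b *: v = 0 -> a = 0 /\ b = 0.

Section Ops.
Variables X Y : normedModType R.

Definition lin_op (f : X -> Y) : Prop :=
  forall (a : R) (u v : X), f (a *: u + v) = a *: f u + f v.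

Definition opnorm (f : X -> Y) : R := sup [set `|f x| | x in @cball1 X].

Definition compact_op (f : X -> Y) : Prop :=
  lin_op f /\ compact (closure (f @` @cball1 X)).

Definition K_dual_elt (Phi : (X -> Y) -> R) : Prop :=
  (forall (a : R) (A B : X -> Y), compact_op A -> compact_op B ->
      Phi (fun x => a *: A x + B x) = a * Phi A + Phi B) /\
  exists C : R, forall A, compact_op A -> `|Phi A| <= C * opnorm A.

Definition K_dualnorm (Phi : (X -> Y) -> R) : R :=
  sup [set `|Phi A| | A in [set A | compact_op A /\ opnorm A <= 1]].

Definition K_support (T : X -> Y) (Phi : (X -> Y) -> R) : Prop :=
  K_dual_elt Phi /\ K_dualnorm Phi = 1 /\ Phi T = opnorm T.

Definition smooth_point_K (T : X -> Y) : Prop :=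
  compact_op T /\ T <> (fun _ => 0) /\
  (exists Phi, K_support T Phi) /\
  (forall Phi1 Phi2, K_support T Phi1 -> K_support T Phi2 ->
     forall A, compact_op A -> Phi1 A = Phi2 A).

Definition unif_BPB_approx (eps : R) (T A : X -> Y) : Prop :=
  lin_op A /\ (exists C : R, forall x, `|A x| <= C * `|x|) /\ opnorm A = 1 /\
  exists delta : R, 0 < delta /\
    forall x0 : X, `|x0| = 1 -> 1 - delta < `|T x0| ->
      exists u0 : X, `|u0| = 1 /\ `|A u0| = 1 /\ `|u0 - x0| < eps /\
        opnorm (fun x => A x - T x) < eps.
End Ops.
End Defs.

From HB Require Import structures.
From mathcomp Require Import all_boot all_order all_algebra.
From mathcomp Require Import all_classical all_reals all_analysis.
From mathcomp Require Import ring lra.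
Import Order.TTheory GRing.Theory Num.Theory.
Import numFieldNormedType.Exports.
Local Open Scope classical_set_scope.
Local Open Scope ring_scope.
Set Implicit Arguments. Unset Strict Implicit. Unset Printing Implicit Defensive.

(* Let A_n be a smooth uniform eps_n-BPB approximation of T. Near-maximal
   points x, x' of T lie eps_n-close to points u, u' where A_n attains its
   norm; uniqueness of the supporting functional of A_n, tested on rank-one
   operators, gives C u = +-C u' for every compact C, hence C x = +-C x' up
   to 2 eps_n ||C||. Choosing near-maximal points v_n with aligned signs,
   C v_n is Cauchy for every compact C, and its limit L C = ev_lim C is a
   contraction in C with |L T| = 1. A supporting functional Phi of T
   vanishes on every C with L C = 0 (otherwise T + t C would have norm
   above 1), so Phi = psi o L with psi a norm-one functional supporting L T
   in Y, unique since Y is smooth. *)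

Section Smoothness.
Context {R : realType}.

Section LinOp.
Variables (X Y : normedModType R) (f : X -> Y).
Hypothesis f_lin : lin_op f.

Lemma lin_op0 : f 0 = 0.
Proof.
have := f_lin 1 0 0; rewrite !scale1r addr0.
by move/(congr1 (fun y => y - f 0)); rewrite subrr addrK.
Qed.

Lemma lin_opD u v : f (u + v) = f u + f v.
Proof. by rewrite -{1}(scale1r u) f_lin scale1r. Qed.

Lemma lin_opZ a u : f (a *: u) = a *: f u.
Proof. by rewrite -[a *: u]addr0 f_lin lin_op0 addr0. Qed.

Lemma lin_opN u : f (- u) = - f u.
Proof. by rewrite -scaleN1r lin_opZ scaleN1r. Qed.

Lemma lin_opB u v : f (u - v) = f u - f v.
Proof. by rewrite lin_opD lin_opN. Qed.
End LinOp.

Lemma dual_elt_lin (V : normedModType R) (g : V -> R) : dual_elt g -> lin_op g.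
Proof. by case. Qed.

Lemma dual_eltZ (V : normedModType R) (g : V -> R) a u :
  dual_elt g -> g (a *: u) = a * g u.
Proof. by move/dual_elt_lin/lin_opZ. Qed.

Lemma normalized_unit (V : normedModType R) (x : V) :
  x != 0 -> `| `|x|^-1 *: x| = 1.
Proof. by move=> x0; rewrite normrZ normfV normr_id mulVf ?normr_eq0. Qed.

Lemma scale_normalized (V : normedModType R) (x : V) :
  x != 0 -> `|x| *: (`|x|^-1 *: x) = x.
Proof. by move=> x0; rewrite scalerA divff ?scale1r ?normr_eq0. Qed.

Definition bounded_op (X Y : normedModType R) (f : X -> Y) :=
  lin_op f /\ exists M : R, forall x, `|x| <= 1 -> `|f x| <= M.

Section OpNorm.
Variables (X Y : normedModType R).

Lemma opnorm_le (f : X -> Y) M :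
  (forall x, `|x| <= 1 -> `|f x| <= M) -> opnorm f <= M.
Proof.
move=> fM; apply: ge_sup; last by move=> _ [x x1 <-]; apply: fM.
by exists `|f 0|, 0 => //; rewrite /cball1 /= normr0.
Qed.

Variables (f : X -> Y) (f_bd : bounded_op f).

Lemma opnorm_has_sup : has_sup [set `|f x| | x in @cball1 R X].
Proof.
have [_ [M fM]] := f_bd; split; last by exists M => _ [x x1 <-]; apply: fM.
by exists `|f 0|, 0 => //; rewrite /cball1 /= normr0.
Qed.

Lemma opnorm_ub x : `|x| <= 1 -> `|f x| <= opnorm f.
Proof. by move=> x1; apply: (sup_upper_bound opnorm_has_sup); exists x. Qed.

Lemma opnorm_ge0 : 0 <= opnorm f.
Proof. by apply: le_trans (normr_ge0 (f 0)) (opnorm_ub _); rewrite normr0. Qed.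

Lemma norm_le_opnorm x : `|f x| <= opnorm f * `|x|.
Proof.
have [->|x0] := eqVneq x 0; first by rewrite lin_op0 ?normr0 ?mulr0 //; case: f_bd.
rewrite -{1}(scale_normalized x0) (lin_opZ f_bd.1) normrZ normr_id mulrC.
by rewrite ler_wpM2r // opnorm_ub // normalized_unit.
Qed.
End OpNorm.

Lemma compact_op_bounded (X Y : normedModType R) (f : X -> Y) :
  compact_op f -> bounded_op f.
Proof.
case=> f_lin /compact_bounded [M [_ fM]]; split => //.
exists (`|M| + 1) => x x1; apply: fM; last by apply: subset_closure; exists x.
by rewrite (le_lt_trans (ler_norm M)) // ltrDl.
Qed.

Lemma fnorm_opnorm (V : normedModType R) (g : V -> R) : fnorm g = opnorm g.
Proof. by []. Qed.

Lemma dual_elt_bounded (V : normedModType R) (g : V -> R) :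
  dual_elt g -> bounded_op g.
Proof.
case=> g_lin [C gC]; split => //; exists `|C| => x x1.
apply: le_trans (gC x) _; apply: le_trans (ler_norm _) _.
by rewrite normrM normr_id ler_piMr.
Qed.

Lemma bounded_op_comp (X Y Z : normedModType R) (g : Y -> Z) (f : X -> Y) :
  bounded_op g -> bounded_op f -> bounded_op (g \o f).
Proof.
move=> g_bd f_bd; split; first by move=> a u v /=; rewrite f_bd.1 g_bd.1.
exists (opnorm g * opnorm f) => x x1 /=.
apply: le_trans (norm_le_opnorm g_bd _) _.
by rewrite ler_wpM2l ?opnorm_ge0 ?opnorm_ub.
Qed.

Lemma compact_closure_sub (V : normedModType R) (A K : set V) :
  compact K -> A `<=` K -> compact (closure A).
Proof.
move=> cK AK; apply: (subclosed_compact (@closed_closure _ _) cK).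
rewrite (closure_id K).1; first exact: closureS.
exact: compact_closed (@norm_hausdorff _ _) cK.
Qed.

Section CompactOp.
Variables X Y : normedModType R.

Lemma compact_op0 : compact_op (fun _ : X => 0 : Y).
Proof.
split; first by move=> a u v; rewrite scaler0 addr0.
by apply: compact_closure_sub (@compact_set1 _ 0) _ => _ [x _ <-].
Qed.

Lemma compact_op_rank1 (f : X -> R) (y : Y) :
  bounded_op f -> compact_op (fun x => f x *: y).
Proof.
case=> f_lin [m fm]; split.
  by move=> a u v /=; rewrite f_lin scalerDl -scalerA.
apply: (@compact_closure_sub _ _ ((fun r : R => r *: y) @` `[-m, m])).
  apply: continuous_compact; last exact: segment_compact.
  by apply: continuous_subspaceT => r; exact: scalel_continuous.
by move=> _ [x x1 <-]; exists (f x) => //; rewrite /= in_itv /= -ler_norml fm.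
Qed.

Lemma compact_op_comb (A B : X -> Y) (a : R) :
  compact_op A -> compact_op B -> compact_op (fun x => a *: A x + B x).
Proof.
move=> [A_lin cA] [B_lin cB]; split.
  by move=> c u v /=; rewrite A_lin B_lin !scalerDr !scalerA mulrC addrACA.
apply: (@compact_closure_sub _ _ ((fun p : Y * Y => a *: p.1 + p.2) @`
  (closure (A @` @cball1 R X) `*` closure (B @` @cball1 R X)))).
  apply: continuous_compact; last exact: compact_setX.
  apply: continuous_subspaceT => p.
  apply: (@continuousD _ _ _ (fun q : Y * Y => a *: q.1) snd).
    by apply: continuousZ; [exact: cvg_cst | exact: cvg_fst].
  exact: cvg_snd.
move=> _ [x x1 <-]; exists (A x, B x) => //.
by split; apply: subset_closure; exists x.
Qed.

Lemma scale_op_comb (A : X -> Y) (a : R) :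
  (fun x => a *: A x) = (fun x => (a - 1) *: A x + A x).
Proof. by apply: funext => x; rewrite scalerBl scale1r subrK. Qed.

Lemma compact_op_scale (A : X -> Y) (a : R) :
  compact_op A -> compact_op (fun x => a *: A x).
Proof. by move=> cA; rewrite scale_op_comb; exact: compact_op_comb. Qed.

End CompactOp.

Lemma compact_op_rank1_comp (X Y Z : normedModType R) (h : Y -> R)
    (C : X -> Y) (z : Z) :
  dual_elt h -> compact_op C -> compact_op (fun x => h (C x) *: z).
Proof.
move=> dh cC; apply: compact_op_rank1.
exact: bounded_op_comp (dual_elt_bounded dh) (compact_op_bounded cC).
Qed.

Section KDual.
Variables X Y : normedModType R.
Variable Phi : (X -> Y) -> R.
Hypothesis Phi_dual : K_dual_elt Phi.

Lemma K_dual_scale (A : X -> Y) a :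
  compact_op A -> Phi (fun x => a *: A x) = a * Phi A.
Proof.
by move=> cA; rewrite scale_op_comb Phi_dual.1 // mulrBl mul1r subrK.
Qed.

Lemma K_dualnorm_has_sup :
  has_sup [set `|Phi A| | A in [set A | compact_op A /\ opnorm A <= 1]].
Proof.
have [_ [C PhiC]] := Phi_dual; split.
  exists `|Phi (fun _ => 0)|, (fun _ => 0) => //; split; first exact: compact_op0.
  by apply: opnorm_le => x _; rewrite normr0.
exists `|C| => _ [A [cA A1] <-]; apply: le_trans (PhiC A cA) _.
apply: le_trans (ler_norm _) _; rewrite normrM (ger0_norm (opnorm_ge0 _)).
  by rewrite ler_piMr.
exact: compact_op_bounded.
Qed.

Lemma K_dual_le_opnorm (A : X -> Y) :
  K_dualnorm Phi = 1 -> compact_op A -> `|Phi A| <= opnorm A.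
Proof.
move=> Phi1 cA; have A_bd := compact_op_bounded cA.
have [_ [C PhiC]] := Phi_dual.
have [A0|A0] := eqVneq (opnorm A) 0.
  by apply: le_trans (PhiC A cA) _; rewrite A0 mulr0.
have k0 : 0 < (opnorm A)^-1 by rewrite invr_gt0 lt0r A0 opnorm_ge0.
have : `|Phi (fun x => (opnorm A)^-1 *: A x)| <= 1.
  rewrite -Phi1; apply: (sup_upper_bound K_dualnorm_has_sup).
  exists (fun x => (opnorm A)^-1 *: A x) => //; split; first exact: compact_op_scale.
  apply: opnorm_le => x x1; rewrite normrZ gtr0_norm // ler_pdivrMl ?mulr1.
    exact: opnorm_ub.
  by rewrite lt0r A0 opnorm_ge0.
by rewrite K_dual_scale // normrM gtr0_norm // ler_pdivrMl ?mulr1 // -invr_gt0.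
Qed.

End KDual.

Lemma K_support_intro (X Y : normedModType R) (A : X -> Y) (Phi : (X -> Y) -> R) :
  compact_op A -> opnorm A = 1 ->
  (forall a (B C : X -> Y), compact_op B -> compact_op C ->
     Phi (fun x => a *: B x + C x) = a * Phi B + Phi C) ->
  (forall B, compact_op B -> `|Phi B| <= opnorm B) ->
  Phi A = 1 -> K_support A Phi.
Proof.
move=> cA A1 Phi_lin Phi_le PhiA.
have Phi_dual : K_dual_elt Phi.
  by split => //; exists 1 => B cB; rewrite mul1r Phi_le.
split => //; split; last by rewrite PhiA A1.
apply/le_anti/andP; split.
  apply: ge_sup; first by exists `|Phi A|, A => //; split; rewrite ?A1.
  by move=> _ [B [cB B1] <-]; apply: le_trans (Phi_le B cB) B1.
apply: (sup_upper_bound (K_dualnorm_has_sup Phi_dual)).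
by exists A; [split; rewrite ?A1 | rewrite PhiA normr1].
Qed.



Definition norming (V : normedModType R) (g : V -> R) (y : V) :=
  dual_elt g /\ fnorm g = 1 /\ g y = `|y|.

Lemma norming_le (V : normedModType R) (g : V -> R) (y z : V) :
  norming g y -> `|g z| <= `|z|.
Proof.
case=> dg [g1 _]; rewrite -[leRHS]mul1r -g1 fnorm_opnorm.
exact: norm_le_opnorm (dual_elt_bounded dg) _.
Qed.

Section SmoothSpace.
Variables (Y : normedModType R).
Hypothesis Y_smooth : smooth_space Y.

Lemma norming_exists (y : Y) : y != 0 -> exists g, norming g y.
Proof. by move=> y0; have [_ [g [gy _]]] := Y_smooth y0; exists g. Qed.

Lemma norming_unique (y : Y) g1 g2 :
  y != 0 -> norming g1 y -> norming g2 y -> g1 = g2.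
Proof.
move=> y0 g1y g2y; have [_ [g [_ g_uniq]]] := Y_smooth y0.
by rewrite -(g_uniq _ g1y) -(g_uniq _ g2y).
Qed.

End SmoothSpace.

Lemma unit_inverse_pair (a b : R) :
  a * b = 1 -> `|a| <= 1 -> `|b| <= 1 -> b = a /\ (a = 1 \/ a = -1).
Proof.
move=> ab a1 b1.
have na : `|a| = 1.
  apply/le_anti; rewrite a1 /= -(normr1 R) -ab normrM.
  by rewrite -[leRHS]mulr1 ler_wpM2l.
move/eqP: na; rewrite eqr_norml => /andP [/orP [/eqP ea|/eqP ea] _].
  by move: ab; rewrite ea mul1r; split; [|left].
by move: ab; rewrite ea mulN1r => /eqP; rewrite eqr_oppLR => /eqP; split; [|right].
Qed.

Section SmoothPointK.
Variables (X Y : normedModType R) (A : X -> Y).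
Hypotheses (A_smooth : smooth_point_K A) (A1 : opnorm A = 1).

Lemma eval_K_support (g : Y -> R) (w : X) :
  `|w| = 1 -> `|A w| = 1 -> norming g (A w) -> K_support A (fun B => g (B w)).
Proof.
move=> w1 Aw1 gAw; have [dg [g1 gAw1]] := gAw.
apply: K_support_intro => //; first exact: A_smooth.1.
- by move=> a B C cB cC; rewrite dg.1.
- move=> B cB; apply: le_trans (norming_le _ gAw) _.
  by rewrite -[leRHS]mulr1 -w1; exact/norm_le_opnorm/compact_op_bounded.
- by rewrite gAw1 Aw1.
Qed.

Lemma smooth_K_eval_eq (u u' : X) (g g' : Y -> R) :
  `|u| = 1 -> `|u'| = 1 -> `|A u| = 1 -> `|A u'| = 1 ->
  norming g (A u) -> norming g' (A u') ->
  forall B, compact_op B -> g (B u) = g' (B u').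
Proof.
move=> u1 u'1 Au1 Au'1 gAu g'Au'; have [_ [_ [_ Phi_uniq]]] := A_smooth.
by apply: Phi_uniq; apply: eval_K_support.
Qed.

Hypothesis Y_smooth : smooth_space Y.

(* Tested on x |-> h (A x) *: y, smooth_K_eval_eq gives g = a g' with
   a = +-1; tested on x |-> h (C x) *: A u it gives h (C u - a C u') = 0. *)
Lemma smooth_K_attaining_sign (u u' : X) :
  `|u| = 1 -> `|u'| = 1 -> `|A u| = 1 -> `|A u'| = 1 ->
  exists2 s : R, s = 1 \/ s = -1 & forall C : X -> Y, compact_op C -> C u = s *: C u'.
Proof.
move=> u1 u'1 Au1 Au'1.
have nz (w : X) : `|A w| = 1 -> A w != 0 by move=> Aw1; rewrite -normr_eq0 Aw1 oner_eq0.
have [g gAu] := norming_exists Y_smooth (nz _ Au1).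
have [g' g'Au'] := norming_exists Y_smooth (nz _ Au'1).
have [dg [_ gAu1]] := gAu; have [dg' [_ g'Au'1]] := g'Au'.
have E := smooth_K_eval_eq u1 u'1 Au1 Au'1 gAu g'Au'.
have rank1A h y : dual_elt h -> g (h (A u) *: y) = g' (h (A u') *: y).
  by move=> dh; apply: (E (fun x => h (A x) *: y));
    apply: compact_op_rank1_comp => //; exact: A_smooth.1.
set a := g (A u'); set b := g' (A u).
have g_g' y : g y = a * g' y.
  by have := rank1A g y dg; rewrite !dual_eltZ // gAu1 Au1 mul1r.
have g'_g y : b * g y = g' y.
  by have := rank1A g' y dg'; rewrite !dual_eltZ // g'Au'1 Au'1 mul1r.
have [ba a_sign] : b = a /\ (a = 1 \/ a = -1).
  apply: unit_inverse_pair.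
  - by have := g_g' (A u); rewrite -g'_g gAu1 Au1 !mulr1 => /esym.
  - by rewrite -Au'1 (norming_le _ gAu).
  - by rewrite -Au1 (norming_le _ g'Au').
exists a => // C cC; apply/eqP; rewrite -subr_eq0; apply/negPn/negP => w0.
have [h hw] := norming_exists Y_smooth w0; have [dh [_ hw1]] := hw.
have := E _ (compact_op_rank1_comp (A u) dh cC).
rewrite !dual_eltZ // gAu1 Au1 mulr1 -/b ba => hCu.
move/eqP: hw1; rewrite (lin_opB (dual_elt_lin dh)) dual_eltZ // hCu mulrC subrr eq_sym.
by rewrite normr_eq0 (negbTE w0).
Qed.

End SmoothPointK.

(* The factor 8 makes 2 * epsn n <= 1/4, small enough to tell T x from
   - T x on near-maximal points. *)
Definition epsn (n : nat) : R := (n.+1%:R * 8)^-1.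

Lemma epsn_gt0 n : 0 < epsn n.
Proof. by rewrite invr_gt0 mulr_gt0 ?ltr0n. Qed.

Lemma epsn_le n : epsn n <= 8^-1.
Proof. by rewrite lef_pV2 ?posrE ?mulr_gt0 ?ltr0n // ler_peMl // ler1n. Qed.

Lemma epsn_le1 n : epsn n <= 1.
Proof. by apply: le_trans (epsn_le n) _; rewrite invf_le1 ?ler1n. Qed.

Lemma epsn_small (r : R) : 0 < r -> exists N, epsn N < r.
Proof.
move=> r0; set N := Num.Def.trunc r^-1; exists N.
apply: (@le_lt_trans _ _ (N.+1%:R^-1)).
  by rewrite lef_pV2 ?posrE ?mulr_gt0 ?ltr0n // ler_peMr ?ler0n ?ler1n.
by rewrite -[ltRHS]invrK ltf_pV2 ?posrE ?invr_gt0 ?ltr0n // truncnS_gt.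
Qed.

Lemma le0_of_le_epsn (a K : R) : (forall n, a <= K * epsn n) -> a <= 0.
Proof.
move=> aK; apply/ler_addgt0Pr => e e0; rewrite add0r.
have K1 : 0 < `|K| + 1 by rewrite ltr_wpDl.
have [N eN] := epsn_small (divr_gt0 e0 K1); rewrite ltr_pdivlMr // in eN.
apply: le_trans (aK N) _; apply: le_trans (ler_norm _) _.
rewrite normrM (gtr0_norm (epsn_gt0 N)) mulrC; apply/ltW; apply: le_lt_trans eN.
by rewrite ler_wpM2l ?(ltW (epsn_gt0 N)) // lerDl.
Qed.

Fixpoint runmin (f : nat -> R) (n : nat) : R :=
  if n is m.+1 then Num.min (runmin f m) (f n) else f 0%N.

Lemma decreasing_minorant (f : nat -> R) : (forall n, 0 < f n) ->
  exists g : nat -> R, [/\ forall n, 0 < g n, forall n, g n <= f n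
    & forall n m, (n <= m)%N -> g m <= g n].
Proof.
move=> f_gt0; exists (runmin f); split.
- by elim=> [|n IHn] //=; rewrite lt_min IHn f_gt0.
- by case=> [|n] //=; rewrite ge_min lexx orbT.
move=> n; elim=> [|m IHm]; first by rewrite leqn0 => /eqP ->.
rewrite leq_eqVlt => /orP [/eqP -> //|]; rewrite ltnS => /IHm.
by apply: le_trans; rewrite /= ge_min lexx.
Qed.

Lemma norm_sign (s : R) : s = 1 \/ s = -1 -> `|s| = 1.
Proof. by case=> ->; rewrite ?normrN normr1. Qed.

Section NearMax.
Variables (X Y : normedModType R) (T : X -> Y).

Definition near_max (delta : R) (x : X) := `|x| = 1 /\ 1 - delta < `|T x|.

Lemma near_max_le delta delta' x :
  delta <= delta' -> near_max delta x -> near_max delta' x.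
Proof. by move=> dd' [x1 Tx]; split => //; apply: le_lt_trans Tx; rewrite lerB. Qed.

Lemma near_max_normalize delta x : lin_op T -> delta <= 1 ->
  `|x| <= 1 -> 1 - delta < `|T x| -> x != 0 /\ near_max delta (`|x|^-1 *: x).
Proof.
move=> T_lin d1 x1 Tx; have x0 : x != 0.
  by apply: contraTneq Tx => ->; rewrite lin_op0 // normr0 -leNgt subr_ge0.
split => //; split; first exact: normalized_unit.
rewrite lin_opZ // normrZ normfV normr_id; apply: lt_le_trans Tx _.
by rewrite ler_peMl // invf_ge1 // normr_gt0.
Qed.

Lemma near_max_exists delta : bounded_op T -> opnorm T = 1 ->
  0 < delta -> delta <= 1 -> exists x, near_max delta x.
Proof.
move=> T_bd T1 d0 d1.
have [_ [x x1 <-]] := sup_adherent d0 (opnorm_has_sup T_bd).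
rewrite -/(opnorm T) T1 => Tx.
by exists (`|x|^-1 *: x); have [] := near_max_normalize T_bd.1 d1 x1 Tx.
Qed.

Definition sign_coherent (eps delta : R) := forall x x' : X,
  near_max delta x -> near_max delta x' ->
  exists2 s : R, s = 1 \/ s = -1 &
    forall C : X -> Y, compact_op C -> `|C x - s *: C x'| <= 2 * eps * opnorm C.

Lemma sign_coherent_le eps delta delta' :
  delta' <= delta -> sign_coherent eps delta -> sign_coherent eps delta'.
Proof. by move=> dd' coh x x' /(near_max_le dd') xm /(near_max_le dd'); apply: coh. Qed.

Lemma sign_coherent_of_approx eps (A : X -> Y) : smooth_space Y ->
  smooth_point_K A -> unif_BPB_approx eps T A ->
  exists2 delta, 0 < delta & sign_coherent eps delta.
Proof.
move=> Y_smooth A_smooth [_ [_ [A1 [delta [d0 bpb]]]]].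
exists delta => // x x' [x1 Tx] [x'1 Tx'].
have [u [u1 [Au1 [ux _]]]] := bpb x x1 Tx.
have [u' [u'1 [Au'1 [ux' _]]]] := bpb x' x'1 Tx'.
have [s s_sign Cs] := smooth_K_attaining_sign A_smooth A1 Y_smooth u1 u'1 Au1 Au'1.
exists s => // C cC; have C_bd := compact_op_bounded cC.
have -> : C x - s *: C x' = (C x - C u) + s *: (C u' - C x').
  by rewrite scalerBr -(Cs C cC) addrA subrK.
apply: le_trans (ler_normD _ _) _; rewrite normrZ norm_sign // mul1r.
rewrite -!(lin_opB cC.1).
have -> : 2 * eps * opnorm C = opnorm C * eps + opnorm C * eps by ring.
apply: lerD; apply: le_trans (norm_le_opnorm C_bd _) _;
  by rewrite ler_wpM2l ?opnorm_ge0 // ltW // distrC.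
Qed.

Lemma coherent_tolerances :
  (forall n, exists2 delta, 0 < delta & sign_coherent (epsn n) delta) ->
  exists d : nat -> R, [/\ forall n, 0 < d n, forall n, d n <= epsn n,
    forall n m, (n <= m)%N -> d m <= d n
    & forall n, sign_coherent (epsn n) (d n)].
Proof.
move=> coh; have /choice [d1 d1P] : forall n, exists delta,
    0 < delta /\ sign_coherent (epsn n) delta.
  by move=> n; have [delta] := coh n; exists delta.
have min_gt0 n : 0 < Num.min (d1 n) (epsn n) by rewrite lt_min (d1P n).1 epsn_gt0.
have [d [d_gt0 d_le d_dec]] := decreasing_minorant min_gt0.
exists d; split => // n.
  by apply: le_trans (d_le n) _; rewrite ge_min lexx orbT.
by apply: sign_coherent_le (d1P n).2; apply: le_trans (d_le n) _; rewrite ge_min lexx.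
Qed.

End NearMax.

Lemma norm_double_le (V : normedModType R) (a b : V) :
  2 * `|b| <= `|a + b| + `|a - b|.
Proof.
apply: le_trans (ler_normB (a + b) (a - b)).
have -> : (a + b) - (a - b) = 2 *: b.
  by rewrite opprB addrC addrA subrK scaler_nat mulr2n.
by rewrite normrZ ger0_norm.
Qed.

Section EpsnCauchy.
Variables (V : completeNormedModType R) (u : nat -> V) (K : R).
Hypothesis u_cauchy : forall n m, (n <= m)%N -> `|u m - u n| <= K * epsn n.

Lemma epsn_cauchy_cvg : cvg (u @ \oo).
Proof.
apply/cauchy_cvgP/cauchy_exP => e e0.
have K1 : 0 < `|K| + 1 by rewrite ltr_wpDl.
have [N eN] := epsn_small (divr_gt0 e0 K1); rewrite ltr_pdivlMr // in eN.
exists (u N), N => // m /= Nm; rewrite -ball_normE /ball_ /= distrC.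
apply: le_lt_trans (u_cauchy Nm) _; apply: le_lt_trans eN.
rewrite mulrC ler_wpM2l ?(ltW (epsn_gt0 N)) //.
by apply: le_trans (ler_norm K) _; rewrite lerDl.
Qed.

Lemma epsn_cauchy_lim_dist n : `|u n - lim (u @ \oo)| <= K * epsn n.
Proof.
apply: (closed_cvg _ (@closed_closed_ball_ R V (u n) (K * epsn n)) _ _ epsn_cauchy_cvg).
by exists n => // m /= nm; rewrite /closed_ball_ /= distrC; exact: u_cauchy.
Qed.

Lemma epsn_cauchy_lim_eq (y : V) (K' : R) :
  (forall n, `|u n - y| <= K' * epsn n) -> lim (u @ \oo) = y.
Proof.
move=> uy; apply/eqP; rewrite -subr_eq0 -normr_le0.
apply: (@le0_of_le_epsn _ (K + K')) => n.
have -> : lim (u @ \oo) - y = (u n - y) - (u n - lim (u @ \oo)).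
  by rewrite opprB [RHS]addrC addrA subrK.
apply: le_trans (ler_normB _ _) _.
by rewrite mulrDl addrC lerD ?uy ?epsn_cauchy_lim_dist.
Qed.

End EpsnCauchy.

Section LimitFunctional.
Variables (X : normedModType R) (Y : completeNormedModType R) (T : X -> Y).
Hypotheses (cT : compact_op T) (T1 : opnorm T = 1).
Variables (d : nat -> R) (z : nat -> X).
Hypotheses (d_gt0 : forall n, 0 < d n) (d_le : forall n, d n <= epsn n)
  (d_dec : forall n m, (n <= m)%N -> d m <= d n)
  (d_coh : forall n, sign_coherent T (epsn n) (d n))
  (z_max : forall n, near_max T (d n) (z n)).

Lemma T_le1 x : `|x| <= 1 -> `|T x| <= 1.
Proof. by move=> x1; rewrite -T1; exact: opnorm_ub (compact_op_bounded cT) _ x1. Qed.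

(* T (z n) is within 1/4 of T (z 0) or of - T (z 0); vseq n picks the sign. *)
Definition vseq n := if `|T (z n) - T (z 0)| < 1 then z n else - z n.

Lemma near_max_vseq n : near_max T (d n) (vseq n).
Proof.
rewrite /vseq; case: ifP => // _; have [zn1 Tzn] := z_max n.
by split; rewrite ?(lin_opN cT.1) normrN.
Qed.

Lemma near_max_vseq_le n m : (n <= m)%N -> near_max T (d n) (vseq m).
Proof. by move=> nm; apply: near_max_le (d_dec nm) (near_max_vseq m). Qed.

Lemma T_vseq_anchor n : `|T (vseq n) - T (z 0)| <= 4^-1.
Proof.
have z_max0n := near_max_le (d_dec (leq0n n)) (z_max n).
have [s s_sign Cs] := d_coh z_max0n (z_max 0).
have := Cs T cT; rewrite T1 mulr1 => Tzs.
have e0 := epsn_le 0; have d0 := d_le 0; have [_ Tz0] := z_max 0.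
case: s_sign => s1; rewrite s1 ?scale1r ?scaleN1r ?opprK in Tzs.
  by rewrite /vseq ifT; lra.
have := norm_double_le (T (z n)) (T (z 0)) => Tdouble.
by rewrite /vseq ifF ?(lin_opN cT.1) -?opprD ?normrN; lra.
Qed.

Lemma vseq_cauchy n m : (n <= m)%N ->
  forall C : X -> Y, compact_op C ->
  `|C (vseq m) - C (vseq n)| <= 2 * opnorm C * epsn n.
Proof.
move=> nm C cC; have [s s_sign Cs] := d_coh (near_max_vseq_le nm) (near_max_vseq n).
rewrite mulrAC; case: s_sign => s1; rewrite s1 in Cs.
  by have := Cs C cC; rewrite scale1r.
have := Cs T cT; rewrite T1 mulr1 scaleN1r opprK => Tsum.
have := norm_double_le (T (vseq m)) (T (vseq n)) => Tdouble.
have := ler_normB (T (vseq m) - T (z 0)) (T (vseq n) - T (z 0)).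
rewrite opprB addrA subrK => Tdiff.
have := T_vseq_anchor m; have := T_vseq_anchor n; have [_] := near_max_vseq n.
by have := d_le n; have := epsn_le n; lra.
Qed.

Definition ev_lim (C : X -> Y) : Y := lim ((fun n => C (vseq n)) @ \oo).

Lemma ev_lim_dist C n :
  compact_op C -> `|C (vseq n) - ev_lim C| <= 2 * opnorm C * epsn n.
Proof. by move=> cC; apply: epsn_cauchy_lim_dist => k m km; exact: vseq_cauchy. Qed.

Lemma ev_lim_eq C y K : compact_op C ->
  (forall n, `|C (vseq n) - y| <= K * epsn n) -> ev_lim C = y.
Proof. by move=> cC; apply: epsn_cauchy_lim_eq => k m km; exact: vseq_cauchy. Qed.

Lemma ev_lim_lin a A B : compact_op A -> compact_op B ->
  ev_lim (fun x => a *: A x + B x) = a *: ev_lim A + ev_lim B.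
Proof.
move=> cA cB; apply: (@ev_lim_eq _ _ (`|a| * (2 * opnorm A) + 2 * opnorm B)).
  exact: compact_op_comb.
move=> n; rewrite opprD addrACA -scalerBr.
apply: le_trans (ler_normD _ _) _; rewrite normrZ mulrDl.
by apply: lerD; rewrite ?ev_lim_dist // -mulrA ler_wpM2l ?ev_lim_dist.
Qed.

Lemma ev_lim_scale a A : compact_op A -> ev_lim (fun x => a *: A x) = a *: ev_lim A.
Proof.
move=> cA; apply: (@ev_lim_eq _ _ (`|a| * (2 * opnorm A))).
  exact: compact_op_scale.
by move=> n; rewrite -scalerBr normrZ -mulrA ler_wpM2l ?ev_lim_dist.
Qed.

Lemma ev_lim_rank1 (h : Y -> R) C y : dual_elt h -> compact_op C ->
  ev_lim (fun x => h (C x) *: y) = h (ev_lim C) *: y.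
Proof.
move=> dh cC; apply: (@ev_lim_eq _ _ (opnorm h * (2 * opnorm C) * `|y|)).
  exact: compact_op_rank1_comp.
move=> n; rewrite -scalerBl normrZ -(lin_opB (dual_elt_lin dh)) mulrAC.
rewrite ler_wpM2r // -mulrA.
apply: le_trans (norm_le_opnorm (dual_elt_bounded dh) _) _.
by apply: ler_wpM2l; [exact/opnorm_ge0/dual_elt_bounded | exact: ev_lim_dist].
Qed.

Lemma ev_lim_norm_le C : compact_op C -> `|ev_lim C| <= opnorm C.
Proof.
move=> cC; rewrite -subr_le0; apply: (@le0_of_le_epsn _ (2 * opnorm C)) => n.
have [vn1 _] := near_max_vseq n.
have := norm_le_opnorm (compact_op_bounded cC) (vseq n); rewrite vn1 mulr1.
have := lerB_dist (ev_lim C) (C (vseq n)); rewrite distrC.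
by have := ev_lim_dist n cC; lra.
Qed.

Lemma ev_lim_T : `|ev_lim T| = 1.
Proof.
apply/le_anti; rewrite -{1}T1 ev_lim_norm_le //=.
rewrite -subr_le0; apply: (@le0_of_le_epsn _ 3) => n.
have [_ Tvn] := near_max_vseq n; have := d_le n.
have := ev_lim_dist n cT; rewrite T1 mulr1.
by have := lerB_dist (T (vseq n)) (ev_lim T); lra.
Qed.

Lemma norm_near_max_le n C u : compact_op C -> near_max T (d n) u ->
  `|C u| <= `|ev_lim C| + 4 * opnorm C * epsn n.
Proof.
move=> cC u_max; have [s s_sign Cs] := d_coh u_max (near_max_vseq n).
have := Cs C cC; have := ev_lim_dist n cC.
have := ler_normD (C u - s *: C (vseq n)) (s *: C (vseq n)).
rewrite subrK normrZ norm_sign // mul1r.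
by have := lerB_dist (C (vseq n)) (ev_lim C); lra.
Qed.

(* Where |T x| <= 1 - d n the term t C x is absorbed; elsewhere x is
   near-maximal and C x = O(epsn n) because ev_lim C = 0. *)
Lemma opnorm_perturb_le n C t : compact_op C -> ev_lim C = 0 ->
  0 < t -> t * opnorm C <= d n ->
  opnorm (fun x => t *: C x + T x) <= 1 + t * (4 * opnorm C * epsn n).
Proof.
move=> cC LC0 t0 tC; have C_bd := compact_op_bounded cC.
have eps_ge0 : 0 <= t * (4 * opnorm C * epsn n).
  by rewrite mulr_ge0 ?mulr_ge0 ?opnorm_ge0 ?(ltW t0) ?(ltW (epsn_gt0 n)).
apply: opnorm_le => x x1; apply: le_trans (ler_normD _ _) _.
rewrite normrZ gtr0_norm //; have Tx1 := T_le1 x1.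
have [Tx|Tx] := leP `|T x| (1 - d n).
  have : t * `|C x| <= t * opnorm C by rewrite ler_wpM2l ?(ltW t0) ?opnorm_ub.
  lra.
have d1 := le_trans (d_le n) (epsn_le1 n).
have [x0 u_max] := near_max_normalize cT.1 d1 x1 Tx.
have := norm_near_max_le cC u_max; rewrite LC0 normr0 add0r => Cu.
have Cx : `|C x| <= `|C (`|x|^-1 *: x)|.
  rewrite -{1}(scale_normalized x0) (lin_opZ cC.1) normrZ normr_id.
  by rewrite ler_piMl ?normr_ge0.
have : t * `|C x| <= t * (4 * opnorm C * epsn n).
  by rewrite ler_wpM2l ?(ltW t0) // (le_trans Cx Cu).
lra.
Qed.

Lemma K_support_le0 Phi C : K_support T Phi -> compact_op C ->
  ev_lim C = 0 -> Phi C <= 0.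
Proof.
move=> [Phi_dual [Phi1 PhiT]] cC LC0; rewrite T1 in PhiT.
have c0 := opnorm_ge0 (compact_op_bounded cC).
apply: (@le0_of_le_epsn _ (4 * opnorm C)) => n.
set t := d n / (opnorm C + 1).
have c1 : 0 < opnorm C + 1 by rewrite ltr_wpDl.
have t0 : 0 < t by rewrite divr_gt0.
have tC : t * opnorm C <= d n.
  by rewrite mulrAC ler_pdivrMr // ler_wpM2l ?(ltW (d_gt0 n)) ?lerDl.
have cD := compact_op_comb t cC cT.
have := le_trans (ler_norm _) (K_dual_le_opnorm Phi_dual Phi1 cD).
move/le_trans/(_ (opnorm_perturb_le cC LC0 t0 tC)).
by rewrite Phi_dual.1 // PhiT addrC lerD2l ler_pM2l.
Qed.

Lemma K_support_vanish Phi C : K_support T Phi -> compact_op C ->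
  ev_lim C = 0 -> Phi C = 0.
Proof.
move=> sP cC LC0; apply/le_anti; rewrite K_support_le0 //=.
have := K_support_le0 sP (compact_op_scale (-1) cC).
by rewrite ev_lim_scale // LC0 scaler0 (K_dual_scale sP.1) // mulN1r oppr_le0; apply.
Qed.

Lemma K_support_ev_lim_eq Phi B B' : K_support T Phi ->
  compact_op B -> compact_op B' -> ev_lim B = ev_lim B' -> Phi B = Phi B'.
Proof.
move=> sP cB cB' LB; have := K_support_vanish sP (compact_op_comb (-1) cB' cB).
rewrite ev_lim_lin // LB scaleN1r addNr sP.1.1 // => /(_ erefl).
by rewrite mulN1r addrC => /eqP; rewrite subr_eq0 => /eqP.
Qed.

Hypothesis Y_smooth : smooth_space Y.

(* Phi factors through ev_lim via the rank-one operators x |-> g (T x) *: y,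
   and the induced functional on Y norms ev_lim T. *)
Lemma K_support_factor Phi g : K_support T Phi -> norming g (ev_lim T) ->
  forall B, compact_op B -> Phi B = g (ev_lim B).
Proof.
move=> sP gLT; have [[Phi_lin _] [Phi1 PhiT]] := sP; have [dg [_ gLT1]] := gLT.
have LT1 := ev_lim_T; rewrite LT1 in gLT1; rewrite T1 in PhiT.
pose Ry (y : Y) := fun x => g (T x) *: y.
have cRy y : compact_op (Ry y) by exact: compact_op_rank1_comp.
have LRy y : ev_lim (Ry y) = y by rewrite ev_lim_rank1 // gLT1 scale1r.
pose Psi y := Phi (Ry y).
have PhiB B : compact_op B -> Phi B = Psi (ev_lim B).
  by move=> cB; apply: K_support_ev_lim_eq => //; rewrite LRy.
have Psi_le y : `|Psi y| <= `|y|.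
  apply: le_trans (K_dual_le_opnorm sP.1 Phi1 (cRy y)) _.
  apply: opnorm_le => x x1; rewrite normrZ ler_piMl //.
  exact: le_trans (norming_le _ gLT) (T_le1 x1).
have PsiLT : Psi (ev_lim T) = 1 by rewrite -PhiB.
have Psi_dual : dual_elt Psi.
  split; last by exists 1 => y; rewrite mul1r.
  move=> a y y'; rewrite /Psi -Phi_lin //; congr Phi.
  by apply: funext => x; rewrite /Ry scalerDr !scalerA mulrC.
have Psi_norming : norming Psi (ev_lim T).
  split=> //; split; last by rewrite PsiLT LT1.
  apply/le_anti; rewrite fnorm_opnorm opnorm_le /=.
    have := norm_le_opnorm (dual_elt_bounded Psi_dual) (ev_lim T).
    by rewrite PsiLT LT1 normr1 mulr1.
  by move=> y y1; apply: le_trans (Psi_le y) y1.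
have LT0 : ev_lim T != 0 by rewrite -normr_eq0 LT1 oner_eq0.
by move=> B cB; rewrite PhiB // (norming_unique Y_smooth LT0 Psi_norming gLT).
Qed.

Lemma smooth_point_K_of_coherent_near_max : smooth_point_K T.
Proof.
have LT0 : ev_lim T != 0 by rewrite -normr_eq0 ev_lim_T oner_eq0.
have [g gLT] := norming_exists Y_smooth LT0; have [dg [_ gLT1]] := gLT.
split=> //; split.
  move=> T0; suff : opnorm T <= 0 by rewrite T1 ler10.
  by apply: opnorm_le => x _; rewrite T0 normr0.
split.
  exists (fun B => g (ev_lim B)); apply: K_support_intro => //.
  - by move=> a B C cB cC; rewrite ev_lim_lin // dg.1.
  - by move=> B cB; apply: le_trans (norming_le _ gLT) (ev_lim_norm_le cB).
  - by rewrite gLT1 ev_lim_T.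
move=> Phi1 Phi2 sP1 sP2 B cB.
by rewrite (K_support_factor sP1 gLT cB) (K_support_factor sP2 gLT cB).
Qed.

End LimitFunctional.

End Smoothness.

Unset Implicit Arguments.

Theorem proposition2p7 (R : realType) (X Y : completeNormedModType R)
  (T : X -> Y) :
  reflexive_space X -> smooth_space Y -> dim_gt1 X -> dim_gt1 Y ->
  compact_op T -> opnorm T = 1 ->
  (forall eps : R, 0 < eps ->
     exists A : X -> Y, compact_op A /\ A <> T /\
       unif_BPB_approx eps T A /\ smooth_point_K A) ->
  smooth_point_K T.
Proof.
move=> _ Y_smooth _ _ cT T1 approx.
have coh n : exists2 delta, 0 < delta & sign_coherent T (epsn n) delta.
  have [A [_ [_ [A_bpb A_smooth]]]] := approx _ (epsn_gt0 n).
  exact: sign_coherent_of_approx Y_smooth A_smooth A_bpb.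
have [d [d_gt0 d_le d_dec d_coh]] := coherent_tolerances coh.
have /choice [z z_max] : forall n, exists x, near_max T (d n) x.
  move=> n; apply: near_max_exists (compact_op_bounded cT) T1 (d_gt0 n) _.
  exact: le_trans (d_le n) (epsn_le1 n).
exact: (smooth_point_K_of_coherent_near_max cT T1 d_gt0 d_le d_dec d_coh z_max
  Y_smooth).
Qed.
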